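(* Let $W$ be a random vector in $\mathbb R^p$ with $k\le\lambda_{\min}(E[WW^\top])$ and $\sup_{\|\Delta\|_2=1}\|\langle\Delta,W\rangle\|_{\psi_2}\le K$, and let $f:\mathbb R\to\mathbb R$ satisfy $|f(u)-f(v)|\le K\exp\{K(|u|+|v|)\}|u-v|$ for all $u,v$. Then there is a function $B_1:\mathbb R_+^5\to\mathbb R_+$, increasing in its first and in its second argument, such that for all $l\in\mathbb N$ and $\theta,\Delta\in\mathbb R^p$, $$E^{1/l}\{|f(\langle\theta+\Delta,W\rangle)-f(\langle\theta,W\rangle)|^l\}\le B_1(\|\theta\|_2,\|\Delta\|_2,l,k,K)\,E^{1/2}(\langle W,\Delta\rangle^2).$$
   Context: $k,K>0$ are constants. For a real random variable $U$, $\|U\|_{\psi_2}=\sup_{m\in\mathbb N}(E|U|^m)^{1/m}/\sqrt m$. *)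

From HB Require Import structures.
From mathcomp Require Import all_boot all_order all_algebra.
From mathcomp Require Import all_classical all_reals all_analysis.
Set Implicit Arguments. Unset Strict Implicit. Unset Printing Implicit Defensive.
Import Order.TTheory GRing.Theory Num.Theory.
Local Open Scope classical_set_scope.
Local Open Scope ring_scope.

Section Defs.
Context {R : realType}.

Definition dotp (p : nat) (u v : 'rV[R]_p) : R := \sum_(i < p) u 0 i * v 0 i.
Definition norm2 (p : nat) (u : 'rV[R]_p) : R := Num.sqrt (dotp u u).

Context {d : measure_display} {T : measurableType d}.

Definition moment (P : probability T R) (U : T -> R) (m : nat) : \bar R :=
  (\int[P]_x ((`|U x| ^+ m)%:E))%E.

Definition psi2norm (P : probability T R) (U : T -> R) : \bar R :=
  ereal_sup [set ((moment P U m) `^ (m%:R^-1) * ((Num.sqrt m%:R)^-1)%:E)%E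
            | m in [set m : nat | (0 < m)%N]].

Definition second_moment (p : nat) (P : probability T R) (W : T -> 'rV[R]_p)
  : 'M[R]_p :=
  \matrix_(i, j) fine (\int[P]_x ((W x 0 i * W x 0 j)%:E))%E.

End Defs.

From HB Require Import structures.
From mathcomp Require Import all_boot all_order all_algebra.
From mathcomp Require Import all_classical all_reals all_analysis.
From mathcomp Require Import ring lra measurable_realfun.
Set Implicit Arguments. Unset Strict Implicit. Unset Printing Implicit Defensive.
Import Order.TTheory GRing.Theory Num.Theory.
Import numFieldNormedType.Exports.
Local Open Scope classical_set_scope.
Local Open Scope ring_scope.

(* Write u = <θ, W> and δ = <Δ, W>. The growth condition on f gives
   |f(u + δ) - f(u)| ≤ K |δ| exp(K (2|u| + |δ|)). Bounding |δ|^l by l^l e^{|δ|}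
   and splitting the exponent with Young's inequality dominates the l-th power
   of the increment by (K l ‖Δ‖)^l e^A (e^{σY²} + e^{σZ²}), where Y and Z are
   the marginals of W along the unit vectors of Δ and θ, σ = 1/(4eK²), and A
   depends only on ‖θ‖, ‖Δ‖, l and K. The ψ2 bound gives E|Y|^{2m} ≤ (2mK²)^m,
   hence E e^{σY²} ≤ Σ_m 2^{-m} = 2, so E^{1/l}|f(u + δ) - f(u)|^l ≤
   4 K l e^A ‖Δ‖. Finally E<W, Δ>² = Δ E[W Wᵀ] Δᵀ ≥ k ‖Δ‖², since a minimiser
   of the quadratic form on the unit sphere is an eigenvector. *)

Section DotProduct.
Variables (R : realType) (p : nat).
Implicit Types (u v w : 'rV[R]_p).

Lemma dotpE u v : dotp u v = (u *m v^T) 0 0.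
Proof. by rewrite mxE; apply: eq_bigr => i _; rewrite mxE. Qed.

Lemma dotpC u v : dotp u v = dotp v u.
Proof. by apply: eq_bigr => i _; rewrite mulrC. Qed.

Lemma dotpZl c u v : dotp (c *: u) v = c * dotp u v.
Proof. by rewrite /dotp mulr_sumr; apply: eq_bigr => i _; rewrite mxE mulrA. Qed.

Lemma dotpDl u v w : dotp (u + v) w = dotp u w + dotp v w.
Proof. by rewrite /dotp -big_split; apply: eq_bigr => i _; rewrite mxE mulrDl. Qed.

Lemma dotp0l w : dotp 0 w = 0.
Proof. by rewrite /dotp big1 // => i _; rewrite mxE mul0r. Qed.

Lemma dotp_deltal (j : 'I_p) w : dotp (delta_mx 0 j) w = w 0 j.
Proof.
rewrite /dotp (bigD1 j) //= big1 ?addr0 => [|i /negbTE ij].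
  by rewrite !mxE !eqxx mul1r.
by rewrite !mxE ij andbF mul0r.
Qed.

Lemma dotpp_ge0 u : 0 <= dotp u u.
Proof. by apply: sumr_ge0 => i _; rewrite -expr2 sqr_ge0. Qed.

Lemma dotpp_eq0 u : (dotp u u == 0) = (u == 0).
Proof.
apply/idP/eqP => [|->]; last by rewrite dotp0l.
rewrite psumr_eq0 => [/allP u0|i _]; last by rewrite -expr2 sqr_ge0.
apply/rowP => i; have := u0 i (mem_index_enum i).
by rewrite implyTb -expr2 sqrf_eq0 mxE => /eqP.
Qed.

Lemma norm2_ge0 u : 0 <= norm2 u.
Proof. exact: sqrtr_ge0. Qed.

Lemma sqr_norm2 u : norm2 u ^+ 2 = dotp u u.
Proof. by rewrite sqr_sqrtr ?dotpp_ge0. Qed.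

Lemma norm2_gt0 u : u != 0 -> 0 < norm2 u.
Proof. by rewrite sqrtr_gt0 lt_def dotpp_ge0 dotpp_eq0 andbT. Qed.

Lemma norm2Z c u : norm2 (c *: u) = `|c| * norm2 u.
Proof.
by rewrite /norm2 dotpZl dotpC dotpZl mulrA -expr2 sqrtrM ?sqr_ge0 // sqrtr_sqr.
Qed.

Lemma norm2_normalize u : u != 0 -> norm2 ((norm2 u)^-1 *: u) = 1.
Proof.
move=> /norm2_gt0 u0; rewrite norm2Z ger0_norm ?invr_ge0 ?ltW //.
by rewrite mulVf ?gt_eqF.
Qed.

Lemma norm2_delta (j : 'I_p) : norm2 (delta_mx 0 j : 'rV[R]_p) = 1.
Proof. by rewrite /norm2 dotp_deltal mxE !eqxx sqrtr1. Qed.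

(* The nonzero w provides a unit vector when u = 0. *)
Lemma exists_unit_factor u w : w != 0 ->
  exists v, norm2 v = 1 /\ u = norm2 u *: v.
Proof.
move=> w0; have [->|u0] := eqVneq u 0.
  by exists ((norm2 w)^-1 *: w); rewrite norm2_normalize // /norm2 dotp0l sqrtr0 scale0r.
exists ((norm2 u)^-1 *: u); rewrite norm2_normalize // scalerA mulfV ?scale1r //.
by rewrite gt_eqF ?norm2_gt0.
Qed.

End DotProduct.

Lemma eq0_of_quadratic_ge0 (R : realFieldType) (a b : R) :
  (forall t, 0 <= 2 * t * a + t ^+ 2 * b) -> a = 0.
Proof.
move=> ge0; set c := `|b| + 1.
have c0 : 0 < c by rewrite ltr_pwDr ?normr_ge0.
have bc : b <= c by rewrite (le_trans (ler_norm b)) ?lerDl.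
have := ge0 (- a / c).
have -> : 2 * (- a / c) * a + (- a / c) ^+ 2 * b = (a ^+ 2 * b - 2 * a ^+ 2 * c) / c ^+ 2.
  by field; rewrite gt_eqF.
rewrite pmulr_lge0 ?invr_gt0 ?exprn_gt0 // => ?.
by apply/eqP; rewrite -sqrf_eq0 eq_le sqr_ge0 andbT; nra.
Qed.

Section QuadraticForm.
Variables (R : realType) (p : nat).
Implicit Types (M : 'M[R]_p) (x y : 'rV[R]_p).

Definition qform M x : R := (x *m M *m x^T) 0 0.

Lemma qformE M x : qform M x = \sum_j (\sum_i x 0 i * M i j) * x 0 j.
Proof. by rewrite /qform mxE; apply: eq_bigr => j _; rewrite !mxE. Qed.

Lemma qform0 M : qform M 0 = 0.
Proof. by rewrite /qform !mul0mx mxE. Qed.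

Lemma qform1 x : qform 1%:M x = dotp x x.
Proof. by rewrite /qform mulmx1 dotpE. Qed.

Lemma qformZ M c x : qform M (c *: x) = c ^+ 2 * qform M x.
Proof. by rewrite /qform linearZ /= -!scalemxAl -scalemxAr !mxE; ring. Qed.

Lemma qformD M x y t : M^T = M ->
  qform M (x + t *: y) = qform M x + 2 * t * (x *m M *m y^T) 0 0 + t ^+ 2 * qform M y.
Proof.
move=> sM; have sym : y *m M *m x^T = x *m M *m y^T.
  have -> : y *m M *m x^T = (y *m M *m x^T)^T by apply/matrixP => i j; rewrite !ord1 [RHS]mxE.
  by rewrite !trmx_mul trmxK sM mulmxA.
rewrite /qform linearD /= linearZ /= !mulmxDl !mulmxDr -!scalemxAl -!scalemxAr sym !mxE.
ring.
Qed.

Lemma continuous_qform M : continuous (qform M).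
Proof.
have sumC (F : 'I_p -> 'rV[R]_p -> R) :
    (forall i, continuous (F i)) -> continuous (fun x => \sum_i F i x).
  by move=> Fc; apply: continuous_big => [|i _]; [exact: add_continuous | exact: Fc].
have -> : qform M = fun x => \sum_j (\sum_i x 0 i * M i j) * x 0 j.
  by apply/funext => x; rewrite qformE.
apply: (sumC) => j x; apply: continuousM; last exact: coord_continuous.
apply: sumC => i y; apply: continuousM; [exact: coord_continuous | exact: cst_continuous].
Qed.

Lemma compact_unit_sphere : compact [set v : 'rV[R]_p | dotp v v = 1].
Proof.
apply: (@subclosed_compact _ _ [set v : 'rV[R]_p | forall i, `[-1, 1]%classic (v 0 i)]).
- rewrite (_ : [set v | _] = qform 1%:M @^-1` [set 1]).
    by apply: preimage_closed => [v _|]; [exact: continuous_qform | exact: closed_eq].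
  by apply/seteqP; split => v /=; rewrite qform1.
- exact: (@rV_compact R p (fun=> `[-1, 1]%classic) (fun=> @segment_compact R _ _)).
- move=> v /= v1 i; rewrite in_itv /= -ler_norml -(@ler_pXn2r _ 2) ?nnegrE //.
  rewrite expr1n real_normK ?num_real // -v1 /dotp (bigD1 i) //= -expr2 lerDl.
  by apply: sumr_ge0 => j _; rewrite -expr2 sqr_ge0.
Qed.

Section Minimizer.
Variables (M : 'M[R]_p) (c : 'rV[R]_p).
Hypotheses (c1 : dotp c c = 1)
  (cmin : forall v, dotp v v = 1 -> qform M c <= qform M v).

Lemma qform_ge_min y : qform M c * dotp y y <= qform M y.
Proof.
have [->|y0] := eqVneq y 0; first by rewrite dotp0l mulr0 qform0.
have v1 : dotp ((norm2 y)^-1 *: y) ((norm2 y)^-1 *: y) = 1.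
  by rewrite -sqr_norm2 norm2_normalize ?expr1n.
have := cmin v1; rewrite qformZ exprVn -sqr_norm2.
by rewrite ler_pdivlMl ?exprn_gt0 ?norm2_gt0 // mulrC.
Qed.

Lemma qform_min_eigenvalue : M^T = M -> eigenvalue M (qform M c).
Proof.
move=> sM; set m := qform M c; pose N := M - m%:M.
have sN : N^T = N by rewrite /N linearB /= tr_scalar_mx sM.
have qN y : qform N y = qform M y - m * dotp y y.
  by rewrite /qform dotpE mulmxBr mulmxBl mul_mx_scalar -scalemxAl !mxE.
(* t |-> qform N (c + t e_j) is nonnegative and vanishes at 0, so its linear
   coefficient (c N)_j vanishes. *)
have cN : c *m N = 0.
  apply/rowP => j; rewrite [RHS]mxE -(dotp_deltal j (c *m N)) dotpC dotpE.
  apply: (@eq0_of_quadratic_ge0 _ _ (qform N (delta_mx 0 j))) => t.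
  have := qformD c (delta_mx 0 j) t sN.
  by rewrite [qform N c]qN c1 mulr1 subrr add0r => <-; rewrite qN subr_ge0 qform_ge_min.
apply/eigenvalueP; exists c.
  by move/eqP: cN; rewrite mulmxBr mul_mx_scalar subr_eq0 => /eqP.
by apply: contra_eqN c1 => /eqP ->; rewrite dotp0l eq_sym oner_neq0.
Qed.

End Minimizer.

Lemma qform_ge_eigenvalue_lb M (k : R) : M^T = M ->
  (forall a, eigenvalue M a -> k <= a) -> forall x, k * dotp x x <= qform M x.
Proof.
move=> sM klb x; have [->|x0] := eqVneq x 0; first by rewrite dotp0l mulr0 qform0.
have S0 : [set v : 'rV[R]_p | dotp v v = 1] !=set0.
  by exists ((norm2 x)^-1 *: x); rewrite /= -sqr_norm2 norm2_normalize ?expr1n.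
have [c /set_mem c1 cmin] := EVT_min_rV S0 compact_unit_sphere
  (continuous_subspaceT (@continuous_qform M)).
have {}cmin v : dotp v v = 1 -> qform M c <= qform M v by move/mem_set; exact: cmin.
apply: le_trans (qform_ge_min cmin x).
by rewrite ler_wpM2r ?dotpp_ge0 ?klb ?qform_min_eigenvalue.
Qed.

End QuadraticForm.

Section RealInequalities.
Variable R : realType.
Implicit Types (a b s w y z : R).

Lemma fact_leq_expnn n : (n`! <= n ^ n)%N.
Proof.
elim: n => // n IH; rewrite factS expnS leq_mul2l; apply/orP; right.
by apply: leq_trans IH _; case: n => // n; rewrite leq_exp2r.
Qed.

Lemma exprn_le_expR w l : 0 <= w -> w ^+ l <= l%:R ^+ l * expR w.
Proof.
case: l => [|l] w0; first by rewrite !expr0 mul1r -expR0 ler_expR.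
have : w ^+ l.+1 / l.+1`!%:R <= expR w.
  by apply: le_trans (expR_ge1Dxn l w0); rewrite lerDr.
rewrite ler_pdivrMr ?ltr0n ?fact_gt0 // => /le_trans; apply.
by rewrite mulrC ler_wpM2r ?expR_ge0 // -natrX ler_nat fact_leq_expnn.
Qed.

Lemma mulr_le_young a w s : 0 < s -> a * w <= a ^+ 2 / (2 * s) + s * w ^+ 2 / 2.
Proof.
move=> s0; rewrite -subr_ge0.
have -> : a ^+ 2 / (2 * s) + s * w ^+ 2 / 2 - a * w = (a - s * w) ^+ 2 / (2 * s).
  by field; rewrite gt_eqF.
by rewrite divr_ge0 ?sqr_ge0 ?mulr_ge0 ?ltW.
Qed.

Lemma expR_mid_le a b : expR ((a + b) / 2) <= expR a + expR b.
Proof.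
have ea : expR a = expR (a / 2) ^+ 2 by rewrite -expRM_natl; congr expR; field.
have eb : expR b = expR (b / 2) ^+ 2 by rewrite -expRM_natl; congr expR; field.
rewrite mulrDl expRD ea eb.
have := expR_ge0 (a / 2); have := expR_ge0 (b / 2); nra.
Qed.

Lemma expR_linear_le_sqr a b s y z : 0 < s ->
  expR (a * `|y| + b * `|z|) <=
  expR ((a ^+ 2 + b ^+ 2) / (2 * s)) * (expR (s * y ^+ 2) + expR (s * z ^+ 2)).
Proof.
move=> s0; apply: le_trans (ler_wpM2l (expR_ge0 _) (expR_mid_le _ _)).
rewrite -expRD ler_expR.
have := mulr_le_young a `|y| s0; have := mulr_le_young b `|z| s0.
rewrite !real_normK ?num_real // mulrDl; lra.
Qed.

Lemma powR_inv_mul_exprn_le a b (l : nat) : (0 < l)%N ->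
  0 <= a -> 1 <= b -> (b * a ^+ l) `^ l%:R^-1 <= b * a.
Proof.
move=> l0 a0 b1; have b0 := le_trans ler01 b1.
have ba0 : 0 <= b * a by rewrite mulr_ge0.
have le_pow : b * a ^+ l <= (b * a) ^+ l by rewrite exprMn ler_wpM2r ?exprn_ge0 ?ler_eXnr.
apply: le_trans (ge0_ler_powR _ _ _ le_pow) _; rewrite ?invr_ge0 ?nnegrE ?mulr_ge0 ?exprn_ge0 //.
by rewrite -powR_mulrn // -powRrM mulfV ?powRr1 // pnatr_eq0 -lt0n.
Qed.

End RealInequalities.

Section ExponentialGrowth.
Variables (R : realType) (f : R -> R) (K : R).
Hypothesis growth : forall u v, `|f u - f v| <= K * expR (K * (`|u| + `|v|)) * `|u - v|.

Lemma growth_continuous : continuous f.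
Proof.
move=> x; apply/subr_cvg0/norm_cvg0P.
pose g u := K * expR (K * (`|u| + `|x|)) * `|u - x|.
apply: (@squeeze_cvgr _ (nbhs x) _ _ (cst 0) g _ _ 0 (cvg_cst 0)).
  by near=> u; rewrite /= normr_ge0; exact: growth.
rewrite -(mulr0 (K * expR (K * (`|x| + `|x|)))) -(normr0 R) -(subrr x).
apply: cvgM; last by apply: cvg_norm; apply: cvgB; [exact: cvg_id | exact: cvg_cst].
apply: cvgM; first exact: cvg_cst.
apply: continuous_cvg; first exact: continuous_expR.
apply: cvgM; first exact: cvg_cst.
by apply: cvgD; [apply: cvg_norm; exact: cvg_id | exact: cvg_cst].
Unshelve. all: by end_near.
Qed.

Lemma growth_increment_le v h :
  0 <= K -> `|f (v + h) - f v| <= K * `|h| * expR (K * (2 * `|v| + `|h|)).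
Proof.
move=> K0; apply: le_trans (growth _ _) _.
rewrite (addrC v h) addrK mulrAC ler_wpM2l ?mulr_ge0 // ler_expR ler_wpM2l //.
by have := ler_normD h v; lra.
Qed.

End ExponentialGrowth.

Section IncrementExponent.
Variable R : realType.

(* With E|U|^{2m} <= (2mK^2)^m and m^m <= e^m m!, this rate makes the m-th
   term of the series of E exp(subgauss_rate K * U^2) at most 2^-m. *)
Definition subgauss_rate (K : R) : R := (4 * expR 1 * K ^+ 2)^-1.

(* Young's inequality bounds (1 + cK de)|y| + 2cKt|z| by this constant plus
   subgauss_rate K * (y^2 + z^2) / 2. *)
Definition increment_exponent (K t de c : R) : R :=
  ((1 + c * K * de) ^+ 2 + (2 * c * K * t) ^+ 2) / (2 * subgauss_rate K).

Lemma subgauss_rate_gt0 K : 0 < K -> 0 < subgauss_rate K.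
Proof. by move=> K0; rewrite invr_gt0 !mulr_gt0 ?expR_gt0 ?exprn_gt0. Qed.

Lemma subgauss_rate_ge0 (K : R) : 0 <= subgauss_rate K.
Proof. by rewrite invr_ge0 mulr_ge0 ?sqr_ge0 ?mulr_ge0 ?expR_ge0. Qed.

Lemma increment_exponent_ge0 (K t de c : R) : 0 <= increment_exponent K t de c.
Proof. by rewrite divr_ge0 ?addr_ge0 ?sqr_ge0 ?mulr_ge0 ?subgauss_rate_ge0. Qed.

Lemma increment_exponent_le (K t t' de de' c : R) : 0 <= K -> 0 <= c ->
  0 <= t -> t <= t' -> 0 <= de -> de <= de' ->
  increment_exponent K t de c <= increment_exponent K t' de' c.
Proof.
move=> K0 c0 t0 tt' de0 dede'; have cK0 : 0 <= c * K by rewrite mulr_ge0.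
have sq_le a b : 0 <= a -> a <= b -> a ^+ 2 <= b ^+ 2.
  by move=> a0 ab; rewrite lerXn2r ?nnegrE ?(le_trans a0).
rewrite ler_wpM2r ?invr_ge0 ?mulr_ge0 ?subgauss_rate_ge0 //.
apply: lerD; apply: sq_le.
- by rewrite addr_ge0 ?mulr_ge0.
- by rewrite lerD2l ler_wpM2l.
- by rewrite !mulr_ge0.
- by rewrite ler_wpM2l ?mulr_ge0.
Qed.

Lemma growth_increment_exprn_le (f : R -> R) (K t de y z : R) (l : nat) :
  (forall u v, `|f u - f v| <= K * expR (K * (`|u| + `|v|)) * `|u - v|) ->
  0 < K -> 0 <= t -> 0 <= de ->
  `|f (t * z + de * y) - f (t * z)| ^+ l <=
  (K * l%:R * de) ^+ l * expR (increment_exponent K t de l%:R) *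
  (expR (subgauss_rate K * y ^+ 2) + expR (subgauss_rate K * z ^+ 2)).
Proof.
move=> growth K0 t0 de0; have ay := normr_ge0 y.
have inc : `|f (t * z + de * y) - f (t * z)| <=
    K * (de * `|y|) * expR (K * (2 * (t * `|z|) + de * `|y|)).
  have := growth_increment_le growth (t * z) (de * y) (ltW K0).
  by rewrite !normrM (ger0_norm t0) (ger0_norm de0).
apply: le_trans (lerXn2r l (normr_ge0 _) _ inc) _.
  by rewrite nnegrE !mulr_ge0 ?expR_ge0 ?(ltW K0).
set E := expR (increment_exponent _ _ _ _).
set S := expR (subgauss_rate K * y ^+ 2) + _.
have -> : (K * l%:R * de) ^+ l * E * S = (K * de) ^+ l * (l%:R ^+ l * (E * S)).
  by rewrite !exprMn; ring.
have -> : (K * (de * `|y|) * expR (K * (2 * (t * `|z|) + de * `|y|))) ^+ l =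
    (K * de) ^+ l * (`|y| ^+ l * expR (l%:R * (K * (2 * (t * `|z|) + de * `|y|)))).
  by rewrite expRM_natl !exprMn; ring.
rewrite ler_wpM2l ?exprn_ge0 ?mulr_ge0 ?(ltW K0) //.
apply: le_trans (ler_wpM2r (expR_ge0 _) (exprn_le_expR l ay)) _.
rewrite -mulrA ler_wpM2l ?exprn_ge0 ?ler0n // -expRD.
apply: le_trans (expR_linear_le_sqr (1 + l%:R * K * de) (2 * l%:R * K * t) y z
  (subgauss_rate_gt0 K0)).
by rewrite ler_expR; lra.
Qed.

End IncrementExponent.

Section ExponentialSeries.
Variable R : realType.
Local Open Scope ereal_scope.

Lemma EFin_series_lim (a : nat -> R) : cvgn (series a) ->
  \sum_(n <oo) (a n)%:E = (limn (series a))%:E.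
Proof.
move=> ca; rewrite -EFin_lim //; congr (limn _); apply/funext => N /=.
by rewrite /series /= sumEFin.
Qed.

Lemma expR_eseries (y : R) : (expR y)%:E = \sum_(n <oo) (y ^+ n / n`!%:R)%:E.
Proof. by rewrite EFin_series_lim //; exact: is_cvg_series_exp_coeff. Qed.

Lemma eseries_geometric_half : \sum_(n <oo) ((2 ^-1 : R) ^+ n)%:E = 2%:E.
Proof.
have half_lt1 : (`|2 ^-1 : R| < 1)%R by rewrite ger0_norm ?invf_lt1 ?ltr1n.
rewrite exprn_geometric EFin_series_lim; last exact: is_cvg_geometric_series.
rewrite (cvg_lim _ (@cvg_geometric_series R 1 _ half_lt1)) //.
by congr EFin; field.
Qed.

Lemma exprn_div_fact_le (n : nat) : (n%:R ^+ n / n`!%:R <= expR 1 ^+ n :> R)%R.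
Proof.
case: n => [|n]; first by rewrite fact0 divr1.
rewrite -expRM_natl mulr1; apply: le_trans (expR_ge1Dxn n (ler0n _ n.+1)).
by rewrite lerDr.
Qed.

End ExponentialSeries.

Section SubGaussianMoments.
Context (R : realType) (d : measure_display) (T : measurableType d).
Variable P : probability T R.
Local Open Scope ereal_scope.

Lemma moment_ge0 (U : T -> R) m : 0 <= moment P U m.
Proof. by apply: integral_ge0 => x _; rewrite lee_fin exprn_ge0. Qed.

Lemma moment_le_psi2norm (U : T -> R) (K : R) m : psi2norm P U <= K%:E ->
  (0 < m)%N -> moment P U m <= ((K * Num.sqrt m%:R) ^+ m)%:E.
Proof.
move=> psiK m0; have sm0 : (0 < Num.sqrt m%:R :> R)%R by rewrite sqrtr_gt0 ltr0n.
have : moment P U m `^ m%:R^-1 * ((Num.sqrt m%:R)^-1)%:E <= K%:E.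
  by apply: le_trans psiK; apply: ereal_sup_ubound; exists m.
move: (moment_ge0 U m); case: (moment P U m) => [x| |] //; last first.
  by rewrite poweRyr ?invr_neq0 ?pnatr_eq0 -?lt0n // gt0_mulye ?lte_fin ?invr_gt0.
move=> x0 xK; rewrite lee_fin in x0; rewrite lee_fin.
rewrite poweR_EFin -EFinM lee_fin ler_pdivrMr // in xK.
have -> : x = ((x `^ m%:R^-1) ^+ m)%R.
  by rewrite -powR_mulrn ?powR_ge0 // -powRrM mulVf ?powRr1 // pnatr_eq0 -lt0n.
by rewrite lerXn2r ?nnegrE ?powR_ge0 // (le_trans (powR_ge0 _ _) xK).
Qed.

Section SubGaussianTail.
Variables (U : T -> R) (K : R).
Hypotheses (K0 : (0 < K)%R) (mU : measurable_fun setT U) (psiK : psi2norm P U <= K%:E).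

Let s := subgauss_rate K.

Lemma integral_subgauss_term_le m :
  \int[P]_x ((s * U x ^+ 2) ^+ m / m`!%:R)%:E <= ((2^-1) ^+ m)%:E.
Proof.
have s0 : (0 < s)%R := subgauss_rate_gt0 K0.
case: m => [|n].
  under eq_integral do rewrite expr0 fact0 divr1.
  by rewrite integral_cst // mul1e expr0 probability_le1.
set m := n.+1.
have termE x : ((s * U x ^+ 2) ^+ m / m`!%:R)%:E = (s ^+ m / m`!%:R)%:E * (`|U x| ^+ (2 * m))%:E.
  by rewrite -EFinM exprM real_normK ?num_real // exprMn mulrAC.
have cm0 : (0 <= s ^+ m / m`!%:R)%R by rewrite divr_ge0 ?exprn_ge0 ?ltW.
have mU2m : measurable_fun setT (fun x => (`|U x| ^+ (2 * m))%:E).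
  apply/measurable_EFinP; apply: measurable_funX.
  by apply: measurableT_comp => //; exact: normr_measurable.
under eq_integral do rewrite termE.
rewrite ge0_integralZl_EFin //.
apply: le_trans (lee_wpmul2l _ (moment_le_psi2norm psiK _)) _; rewrite -?EFinM ?lee_fin //.
rewrite exprM (exprMn _ K) sqr_sqrtr ?ler0n // natrM.
have -> : (s ^+ m / m`!%:R * (K ^+ 2 * (2%:R * m%:R)) ^+ m =
    (2 * s * K ^+ 2) ^+ m * (m%:R ^+ m / m`!%:R))%R by rewrite !exprMn; ring.
have -> : (2 ^-1 = 2 * s * K ^+ 2 * expR 1 :> R)%R.
  by rewrite /s /subgauss_rate; field; rewrite ?gt_eqF ?expR_gt0.
by rewrite [leRHS]exprMn ler_wpM2l ?exprn_div_fact_le // exprn_ge0 ?mulr_ge0 ?ltW.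
Qed.

Lemma integral_expR_subgauss_le2 : \int[P]_x (expR (s * U x ^+ 2))%:E <= 2%:E.
Proof.
have s0 : (0 < s)%R := subgauss_rate_gt0 K0.
have term_ge0 n x : 0 <= ((s * U x ^+ 2) ^+ n / n`!%:R)%:E.
  by rewrite lee_fin divr_ge0 // exprn_ge0 // mulr_ge0 ?sqr_ge0 // ltW.
have term_meas n : measurable_fun setT (fun x => ((s * U x ^+ 2) ^+ n / n`!%:R)%:E).
  apply/measurable_EFinP; apply: measurable_funM => //.
  by apply: measurable_funX; apply: measurable_funM => //; exact: measurable_funX.
under eq_integral do rewrite expR_eseries.
rewrite integral_nneseries // -eseries_geometric_half.
apply: lee_nneseries => [n _ _|n _]; first exact: integral_ge0.
exact: integral_subgauss_term_le.
Qed.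

End SubGaussianTail.

Lemma moment_le_expR_sqr_sum (K C : R) (g Y Z : T -> R) (l : nat) :
  (0 < K)%R -> (0 <= C)%R ->
  measurable_fun setT g -> measurable_fun setT Y -> measurable_fun setT Z ->
  psi2norm P Y <= K%:E -> psi2norm P Z <= K%:E ->
  (forall x, `|g x| ^+ l <=
     C * (expR (subgauss_rate K * Y x ^+ 2) + expR (subgauss_rate K * Z x ^+ 2)))%R ->
  moment P g l <= (4 * C)%:E.
Proof.
move=> K0 C0 mg mY mZ psiY psiZ gle.
have mE (U : T -> R) : measurable_fun setT U ->
    measurable_fun setT (fun x => (expR (subgauss_rate K * U x ^+ 2))%:E).
  move=> mU; apply/measurable_EFinP; apply: measurableT_comp => //.
  by apply: measurable_funM => //; exact: measurable_funX.
set eY := fun x => (expR (subgauss_rate K * Y x ^+ 2))%:E.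
set eZ := fun x => (expR (subgauss_rate K * Z x ^+ 2))%:E.
have eY0 x : (0 <= eY x)%E by rewrite lee_fin expR_ge0.
have eZ0 x : (0 <= eZ x)%E by rewrite lee_fin expR_ge0.
have int_le : (moment P g l <= \int[P]_x (C%:E * (eY x + eZ x)))%E.
  apply: ge0_le_integral => // [||x _].
  - apply/measurable_EFinP; apply: measurable_funX.
    by apply: measurableT_comp => //; exact: normr_measurable.
  - by apply: emeasurable_funM => //; apply: emeasurable_funD; apply: mE.
  - by rewrite -EFinD -EFinM lee_fin gle.
apply: le_trans int_le _.
rewrite ge0_integralZl_EFin //; last 2 first.
- by move=> x _; rewrite adde_ge0.
- by apply: emeasurable_funD; apply: mE.
rewrite ge0_integralD //; try exact: mE.
rewrite mulrC EFinM lee_wpmul2l ?lee_fin // (_ : 4%:E = 2%:E + 2%:E)%E; last by rewrite -EFinD; congr EFin; lra.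
by apply: leeD; [exact: (integral_expR_subgauss_le2 K0 mY psiY) | exact: (integral_expR_subgauss_le2 K0 mZ psiZ)].
Qed.

End SubGaussianMoments.

Section SecondMoment.
Context (R : realType) (d : measure_display) (T : measurableType d).
Variables (P : probability T R) (p : nat) (W : T -> 'rV[R]_p) (K : R).
Hypothesis mW : forall i, measurable_fun setT (fun x => W x 0 i).
Hypothesis psiK : forall D : 'rV[R]_p, norm2 D = 1 ->
  (psi2norm P (fun x => dotp D (W x)) <= K%:E)%E.

Lemma measurable_dotp (v : 'rV[R]_p) : measurable_fun setT (fun x => dotp v (W x)).
Proof. by apply: measurable_sum => i; apply: measurable_funM. Qed.

Lemma second_moment_sym : (second_moment P W)^T = second_moment P W.
Proof.
apply/matrixP => i j; rewrite !mxE; congr fine.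
by apply: eq_integral => x _; rewrite mulrC.
Qed.

Lemma integrable_sqr_coord i : P.-integrable setT (fun x => (W x 0 i ^+ 2)%:E).
Proof.
apply/integrableP; split; first exact/measurable_EFinP/measurable_funX.
have := moment_le_psi2norm (psiK (norm2_delta _ i)) (isT : (0 < 2)%N).
rewrite /moment; under eq_integral do rewrite dotp_deltal.
under [X in (X < _)%E]eq_integral do rewrite abse_EFin normrX.
by move/le_lt_trans; apply; rewrite ltey.
Qed.

Lemma integrable_mul_coord i j : P.-integrable setT (fun x => (W x 0 i * W x 0 j)%:E).
Proof.
apply: (le_integrable _ _ _ (integrableD _ (integrable_sqr_coord i) (integrable_sqr_coord j))) => //.
  by apply/measurable_EFinP; apply: measurable_funM.
move=> x _; rewrite -EFinD !abse_EFin lee_fin normrM (ger0_norm (addr_ge0 (sqr_ge0 _) (sqr_ge0 _))).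
rewrite -(real_normK (num_real (W x 0 i))) -(real_normK (num_real (W x 0 j))).
have := sqr_ge0 (`|W x 0 i| - `|W x 0 j|); nra.
Qed.

Lemma integral_dotp_sqr (D : 'rV[R]_p) :
  (\int[P]_x (dotp (W x) D ^+ 2)%:E)%E = (qform (second_moment P W) D)%:E.
Proof.
have sqrE x : (dotp (W x) D ^+ 2)%:E =
    (\sum_i \sum_j (D 0 i * D 0 j)%:E * (W x 0 i * W x 0 j)%:E)%E.
  rewrite expr2 /dotp mulr_suml -sumEFin; apply: eq_bigr => i _.
  by rewrite mulr_sumr -sumEFin; apply: eq_bigr => j _; rewrite -EFinM; congr EFin; ring.
have intZ i j : P.-integrable setT
    (fun x => ((D 0 i * D 0 j)%:E * (W x 0 i * W x 0 j)%:E)%E).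
  by apply: integrableZl => //; exact: integrable_mul_coord.
under eq_integral do rewrite sqrE.
rewrite integral_sum //; last by move=> i; apply: integrable_sum => // j _; exact: intZ.
have -> : qform (second_moment P W) D =
    \sum_i \sum_j D 0 i * D 0 j * second_moment P W i j.
  rewrite qformE; under eq_bigr do rewrite mulr_suml.
  by rewrite exchange_big; apply: eq_bigr => i _; apply: eq_bigr => j _; ring.
rewrite -sumEFin; apply: eq_bigr => i _.
rewrite integral_sum // -sumEFin; apply: eq_bigr => j _.
rewrite integralZl //; last exact: integrable_mul_coord.
by rewrite [in RHS]mxE [RHS]EFinM fineK ?(integrable_fin_num _ (integrable_mul_coord i j)).
Qed.

Lemma sqrt_eigenvalue_norm2_le (k : R) : 0 < k ->
    (forall a, eigenvalue (second_moment P W) a -> k <= a) -> forall D : 'rV[R]_p,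
  ((Num.sqrt k * norm2 D)%:E <= (\int[P]_x (dotp (W x) D ^+ 2)%:E) `^ 2^-1)%E.
Proof.
move=> k0 klb D; rewrite integral_dotp_sqr poweR_EFin lee_fin.
have qk := qform_ge_eigenvalue_lb second_moment_sym klb D.
have kD0 : 0 <= k * dotp D D by rewrite mulr_ge0 ?dotpp_ge0 ?ltW.
by rewrite powR12_sqrt ?(le_trans kD0 qk) // -sqrtrM; [exact: ler_wsqrtr | exact: ltW].
Qed.

End SecondMoment.

Section IncrementMoment.
Context (R : realType) (d : measure_display) (T : measurableType d).
Variables (P : probability T R) (p : nat) (W : T -> 'rV[R]_p) (f : R -> R) (K : R).
Hypotheses (K0 : 0 < K) (mW : forall i, measurable_fun setT (fun x => W x 0 i)).
Hypothesis psiK : forall D : 'rV[R]_p, norm2 D = 1 ->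
  (psi2norm P (fun x => dotp D (W x)) <= K%:E)%E.
Hypothesis growth : forall u v, `|f u - f v| <= K * expR (K * (`|u| + `|v|)) * `|u - v|.

Variables (th D : 'rV[R]_p) (l : nat).
Let g x := f (dotp (th + D) (W x)) - f (dotp th (W x)).
Let E := expR (increment_exponent K (norm2 th) (norm2 D) l%:R).

Lemma moment_increment_le_expR : D != 0 ->
  (moment P g l <= (4 * ((K * l%:R * norm2 D) ^+ l * E))%:E)%E.
Proof.
move=> D0; have [uth [uth1 thE]] := exists_unit_factor th D0.
have [uD [uD1 DE]] := exists_unit_factor D D0.
pose Y x := dotp uD (W x); pose Z x := dotp uth (W x).
have thW x : dotp th (W x) = norm2 th * Z x by rewrite {1}thE dotpZl.
have DW x : dotp D (W x) = norm2 D * Y x by rewrite {1}DE dotpZl.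
have mf := continuous_measurable_fun (growth_continuous growth).
have mg : measurable_fun setT g.
  by apply: measurable_funB; apply: measurableT_comp mf (measurable_dotp mW _).
have C0 : 0 <= (K * l%:R * norm2 D) ^+ l * E.
  by rewrite mulr_ge0 ?expR_ge0 // exprn_ge0 // !mulr_ge0 ?norm2_ge0 ?(ltW K0).
apply: (moment_le_expR_sqr_sum K0 C0 mg (measurable_dotp mW _) (measurable_dotp mW _)
  (psiK uD1) (psiK uth1)) => x.
by rewrite /g dotpDl thW DW; apply: growth_increment_exprn_le; rewrite ?norm2_ge0.
Qed.

Lemma moment_increment_le : (0 < l)%N ->
  ((moment P g l) `^ l%:R^-1 <= (4 * K * l%:R * E * norm2 D)%:E)%E.
Proof.
move=> l0; have E1 : 1 <= E by rewrite /E -expR0 ler_expR increment_exponent_ge0.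
have KlD0 : 0 <= K * l%:R * norm2 D by rewrite !mulr_ge0 ?norm2_ge0 ?(ltW K0).
have [D0|D0] := eqVneq D 0.
  have -> : moment P g l = 0%E.
    rewrite -(integral0 P setT); apply: eq_integral => x _.
    by rewrite /g D0 addr0 subrr normr0 expr0n (gtn_eqF l0).
  by rewrite poweR0r ?invr_neq0 ?pnatr_eq0 -?lt0n // D0 /norm2 dotp0l sqrtr0 mulr0.
have itv0 (z : \bar R) : (0 <= z)%E -> z \in `[0%E, +oo%E].
  by move=> z0; rewrite in_itv /= leey andbT.
have momE := moment_increment_le_expR D0.
apply: le_trans (gt0_ler_poweR _ (itv0 _ (moment_ge0 _ _ _)) _ momE) _.
- by rewrite invr_ge0.
- by apply: itv0; rewrite lee_fin !mulr_ge0 ?exprn_ge0 ?(le_trans ler01 E1).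
rewrite poweR_EFin lee_fin.
rewrite (_ : 4 * (_ ^+ l * E) = (4 * E) * (K * l%:R * norm2 D) ^+ l); last first.
  by rewrite [_ ^+ l * E]mulrC mulrA.
rewrite (_ : 4 * K * l%:R * E * norm2 D = (4 * E) * (K * l%:R * norm2 D)); last by ring.
apply: powR_inv_mul_exprn_le => //.
by rewrite (le_trans E1) // ler_peMl ?(le_trans ler01 E1) ?ler1n.
Qed.

End IncrementMoment.

Section IncrementConstant.
Variable R : realType.

(* The summand t + de only serves to make the constant strictly increasing in
   t and de. *)
Definition increment_const (t de c k K : R) : R :=
  4 * K * c * expR (increment_exponent K t de c) / Num.sqrt k + t + de.

Lemma increment_const_ge0 (t de c k K : R) : 0 <= t -> 0 <= de -> 0 <= c -> 0 <= K ->
  0 <= increment_const t de c k K.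
Proof.
by move=> *; rewrite !addr_ge0 ?divr_ge0 ?sqrtr_ge0 ?mulr_ge0 ?expR_ge0.
Qed.

Lemma increment_const_lt (t t' de de' c k K : R) : 0 <= t -> 0 <= de -> 0 <= c -> 0 <= K ->
  t <= t' -> de <= de' -> t + de < t' + de' ->
  increment_const t de c k K < increment_const t' de' c k K.
Proof.
move=> t0 de0 c0 K0 tt' dede' lt; rewrite /increment_const -!addrA ler_ltD //.
rewrite ler_wpM2r ?invr_ge0 ?sqrtr_ge0 // ler_wpM2l ?mulr_ge0 // ler_expR.
exact: increment_exponent_le.
Qed.

Lemma increment_const_mul_ge (t de c k K : R) : 0 < k -> 0 <= t -> 0 <= de ->
  4 * K * c * expR (increment_exponent K t de c) * de <=
  increment_const t de c k K * (Num.sqrt k * de).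
Proof.
move=> k0 t0 de0; rewrite /increment_const; set A := 4 * K * _ * _.
rewrite -addrA mulrDl mulrA divfK ?gt_eqF ?sqrtr_gt0 //.
by rewrite lerDl mulr_ge0 ?addr_ge0 ?mulr_ge0 ?sqrtr_ge0.
Qed.

End IncrementConstant.

Theorem lemma12 (R : realType) :
  exists B1 : R -> R -> R -> R -> R -> R,
    (forall a b c e g, 0 <= a -> 0 <= b -> 0 <= c -> 0 <= e -> 0 <= g ->
       0 <= B1 a b c e g) /\
    (forall a a' b c e g, 0 <= a -> 0 <= b -> 0 <= c -> 0 <= e -> 0 <= g ->
       a < a' -> B1 a b c e g < B1 a' b c e g) /\
    (forall a b b' c e g, 0 <= a -> 0 <= b -> 0 <= c -> 0 <= e -> 0 <= g ->
       b < b' -> B1 a b c e g < B1 a b' c e g) /\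
    forall (p : nat) (d : measure_display) (T : measurableType d)
      (P : probability T R) (W : T -> 'rV[R]_p) (f : R -> R) (k K : R),
      0 < k -> 0 < K ->
      (forall i, measurable_fun setT (fun x => W x 0 i)) ->
      (forall a, eigenvalue (second_moment P W) a -> k <= a) ->
      (forall D : 'rV[R]_p, norm2 D = 1 ->
         (psi2norm P (fun x => dotp D (W x)) <= K%:E)%E) ->
      (forall u v, `|f u - f v| <= K * expR (K * (`|u| + `|v|)) * `|u - v|) ->
      forall (l : nat) (th D : 'rV[R]_p), (0 < l)%N ->
        ((moment P (fun x => (f (dotp (th + D) (W x)) - f (dotp th (W x)))%R) l)
            `^ (l%:R^-1)%R
         <= (B1 (norm2 th) (norm2 D) l%:R k K)%:E
            * (\int[P]_x ((dotp (W x) D ^+ 2)%R%:E)) `^ (2^-1)%R)%E.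
Proof.
exists (@increment_const R).
split=> [a b c e g a0 b0 c0 _ g0|]; first exact: increment_const_ge0.
split=> [a a' b c e g a0 b0 c0 _ g0 aa'|].
  by apply: increment_const_lt; rewrite ?lexx ?ltrD2r ?(ltW aa').
split=> [a b b' c e g a0 b0 c0 _ g0 bb'|].
  by apply: increment_const_lt; rewrite ?lexx ?ltrD2l ?(ltW bb').
move=> p d T P W f k K k0 K0 mW eigk psiK growth l th D l0.
apply: le_trans (moment_increment_le K0 mW psiK growth th D l0) _.
apply: le_trans (lee_wpmul2l _ (sqrt_eigenvalue_norm2_le mW psiK k0 eigk D)); last first.
  by rewrite lee_fin increment_const_ge0 ?norm2_ge0 ?ler0n ?(ltW K0).
by rewrite -EFinM lee_fin increment_const_mul_ge ?norm2_ge0.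
Qed.
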